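(* Let $k$ be a positive integer and let $M(2k)$ be the perfect matching derangement graph. Then: (1) $M(2k)$ is vertex transitive, and the natural action of $\mathrm{Sym}(2k)$ on perfect matchings (induced by permuting the vertices of $K_{2k}$) gives a subgroup of automorphisms of $M(2k)$ acting transitively on its vertices; (2) the maximum size of a clique in $M(2k)$ is $2k-1$; (3) the maximum size of a coclique (independent set) in $M(2k)$ is $(2k-3)!!$.
   Context: The perfect matching derangement graph $M(2k)$ has as vertices all perfect matchings of the complete graph $K_{2k}$ (sets of $k$ pairwise vertex-disjoint edges), two perfect matchings being adjacent if and only if they have no edge in common. For odd $n$, $n!!=n(n-2)\cdots1$, with $(-1)!!=1$. *)

From mathcomp Require Import all_boot fingroup perm.
Set Implicit Arguments. Unset Strict Implicit. Unset Printing Implicit Defensive.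

(* Edges of K_n are 2-subsets of 'I_n.  A perfect matching is a set of edges
   that partitions the vertex set [set: 'I_n] into 2-element blocks. *)
Definition is_pm (n : nat) (M : {set {set 'I_n}}) : bool :=
  partition M [set: 'I_n] && [forall e in M, #|e| == 2].

Definition pm (n : nat) := {M : {set {set 'I_n}} | is_pm M}.

Definition pm_adj (n : nat) (M N : pm n) : bool :=
  [disjoint val M & val N].

Definition pm_aut (n : nat) (f : pm n -> pm n) : Prop :=
  bijective f /\ forall M N, pm_adj (f M) (f N) = pm_adj M N.

Definition pm_act_set (n : nat) (s : {perm 'I_n}) (M : {set {set 'I_n}})
  : {set {set 'I_n}} := [set [set s x | x in e] | e : {set 'I_n} in M].

Definition is_clique (n : nat) (S : {set pm n}) : Prop :=
  {in S &, forall M N, M != N -> pm_adj M N}.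

Definition is_coclique (n : nat) (S : {set pm n}) : Prop :=
  {in S &, forall M N, ~~ pm_adj M N}.

(* (2m-1)!! = 1 * 3 * ... * (2m-1), so that (2k-3)!! = odd_dfact k.-1,
   with (-1)!! = odd_dfact 0 = 1. *)
Definition odd_dfact (m : nat) : nat := \prod_(i < m) (2 * i + 1).

(* Grouping the perfect matchings of a 2m-set by the mate of a fixed vertex x
   gives the recursion |M(2m)| = (2m-1) |M(2m-2)|, hence |M(2k)| = (2k-1)!!; the
   same induction, moving the edge through x into place by a transposition,
   shows that Sym(2k) acts transitively on M(2k), by automorphisms.
   The members of a clique give a fixed vertex pairwise distinct mates, so a
   clique has at most 2k-1 members; the 1-factorisation of K_{2k} built from
   the reflections x |-> 2r - x of Z_{2k-1} attains this.  The matchings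
   containing a fixed edge form a coclique of size (2k-3)!!, and no coclique S
   is larger by the clique-coclique bound |C| |S| <= |V| of vertex-transitive
   graphs: (2k-1) |S| <= (2k-1)!!. *)

From mathcomp Require Import all_boot fingroup perm action zify.
Set Implicit Arguments. Unset Strict Implicit. Unset Printing Implicit Defensive.

Lemma odd_dfactS m : odd_dfact m.+1 = odd_dfact m * (2 * m + 1).
Proof. by rewrite /odd_dfact big_ord_recr. Qed.

Section PerfectMatchings.

Variable T : finType.
Implicit Types (x y : T) (A e : {set T}) (M : {set {set T}}).

Definition pmatchings A := [set M | partition M A && [forall e in M, #|e| == 2]].

Lemma pmatchingsP A M :
  reflect (partition M A /\ {in M, forall e, #|e| = 2}) (M \in pmatchings A).
Proof.
rewrite inE; apply: (iffP andP) => -[PM M2]; split=> //.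
  by move=> e /(forall_inP M2)/eqP.
by apply/forall_inP => e /M2 ->.
Qed.

Lemma pmatchings0 : pmatchings set0 = [set set0].
Proof.
apply/setP => M; rewrite !inE partition_set0.
by case: eqP => [->|] //=; apply/forall_inP => e; rewrite inE.
Qed.

Lemma pmatching_edge_sub A M e : M \in pmatchings A -> e \in M -> e \subset A.
Proof. by case/pmatchingsP => PM _; apply: partitionS. Qed.

Lemma pmatching_edge_notin A M x y :
  M \in pmatchings (A :\: [set x; y]) -> [set x; y] \notin M.
Proof.
move=> MA; apply/negP => /(pmatching_edge_sub MA)/subsetP/(_ x).
by rewrite !inE eqxx => /(_ isT).
Qed.

Lemma pmatching_mate A M x :
  M \in pmatchings A -> x \in A -> exists2 y, y != x & [set x; y] \in M.
Proof.
case/pmatchingsP=> PM M2 xA; rewrite -(cover_partition PM) in xA.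
have /M2/eqP/cards2P[a [b [ab Eab]]] := pblock_mem xA.
have := mem_pblock M x; rewrite xA Eab !inE => /orP[]/eqP ?; subst x.
  by exists b; rewrite 1?eq_sym // -Eab pblock_mem.
by exists a; rewrite // setUC -Eab pblock_mem.
Qed.

Lemma pmatching_mate_uniq A M x y z : M \in pmatchings A ->
  [set x; y] \in M -> [set x; z] \in M -> y != x -> y = z.
Proof.
case/pmatchingsP=> PM _ xyM xzM yx.
have Exyz : [set x; y] = [set x; z].
  apply/eqP; apply: contraT => ne.
  have /trivIsetP/(_ _ _ xyM xzM ne)/disjointFr := partition_trivIset PM.
  by move/(_ x); rewrite !inE eqxx => /(_ isT).
by move: (setU11 y [set x]); rewrite setUC -/[set x; y] Exyz !inE (negbTE yx) => /eqP.
Qed.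

Lemma pmatchingsU2 A M x y : x \in A -> y \in A -> x != y ->
  M \in pmatchings (A :\: [set x; y]) -> [set x; y] |: M \in pmatchings A.
Proof.
move=> xA yA xy /pmatchingsP[PM M2]; apply/pmatchingsP; split.
  have sxyA : [set x; y] \subset A by rewrite subUset !sub1set xA yA.
  rewrite -[A in partition _ A](setID A [set x; y]) (setIidPr sxyA).
  apply: partitionU1 => //; first by apply/set0Pn; exists x; rewrite !inE eqxx.
  by rewrite -setI_eq0; apply/eqP/setP => z; rewrite !inE; case: (_ || _).
by move=> e /setU1P[->|/M2//]; rewrite cards2 xy.
Qed.

Lemma pmatchingsD2 A M x y : M \in pmatchings A -> [set x; y] \in M ->
  M :\ [set x; y] \in pmatchings (A :\: [set x; y]).
Proof.
case/pmatchingsP=> PM M2 xyM; apply/pmatchingsP; split; first exact: partitionD1.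
by move=> e /setD1P[_ /M2].
Qed.

Lemma card_pmatchings_edge A x y : x \in A -> y \in A -> x != y ->
  #|[set M in pmatchings A | [set x; y] \in M]| = #|pmatchings (A :\: [set x; y])|.
Proof.
move=> xA yA xy.
have -> : [set M in pmatchings A | [set x; y] \in M] =
          [set [set x; y] |: M | M in pmatchings (A :\: [set x; y])].
  apply/setP => M; rewrite inE; apply/andP/imsetP => [[MA xyM] | [N NA ->]].
    by exists (M :\ [set x; y]); rewrite ?setD1K ?pmatchingsD2.
  by rewrite pmatchingsU2 ?setU11.
apply: card_in_imset => M N MA NA /= EMN.
by rewrite -(setU1K (pmatching_edge_notin MA)) EMN (setU1K (pmatching_edge_notin NA)).
Qed.

Definition mate x M : T := odflt x [pick y | (y != x) && ([set x; y] \in M)].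

Lemma mateP A M x : M \in pmatchings A -> x \in A ->
  mate x M != x /\ [set x; mate x M] \in M.
Proof.
move=> MA xA; rewrite /mate; case: pickP => [y /andP[] // | none].
by have [y yx xyM] := pmatching_mate MA xA; have := none y; rewrite yx xyM.
Qed.

Lemma mate_eq A M x y : M \in pmatchings A -> x \in A -> y != x ->
  (mate x M == y) = ([set x; y] \in M).
Proof.
move=> MA xA yx; have [mx xmM] := mateP MA xA.
apply/eqP/idP => [<- // | xyM]; exact: (pmatching_mate_uniq MA xmM xyM mx).
Qed.

Lemma card_pmatchings_mate A x : x \in A ->
  #|pmatchings A| = \sum_(y in A :\ x) #|pmatchings (A :\: [set x; y])|.
Proof.
move=> xA; rewrite -sum1_card (partition_big (mate x) (mem (A :\ x))) /=; last first.
  move=> M MA; have [mx xmM] := mateP MA xA.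
  by rewrite !inE mx (subsetP (pmatching_edge_sub MA xmM)) // !inE eqxx orbT.
apply: eq_bigr => y /setD1P[yx yA]; rewrite -card_pmatchings_edge 1?eq_sym //.
rewrite -sum1_card; apply: eq_bigl => M; rewrite inE.
by case MA: (M \in pmatchings A) => //=; rewrite (mate_eq MA).
Qed.

Lemma card_pmatchings A m : #|A| = 2 * m -> #|pmatchings A| = odd_dfact m.
Proof.
elim: m A => [|m IHm] A cardA.
  move/eqP: cardA; rewrite cards_eq0 => /eqP ->.
  by rewrite pmatchings0 cards1 /odd_dfact big_ord0.
have /card_gt0P[x xA] : 0 < #|A| by rewrite cardA mulnS.
rewrite (card_pmatchings_mate xA) (eq_bigr (fun _ => odd_dfact m)); last first.
  move=> y /setD1P[yx yA]; apply: IHm; rewrite cardsDS ?subUset ?sub1set ?xA ?yA //.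
  by rewrite cards2 eq_sym yx cardA mulnS addKn.
have cardAx : #|A :\ x| = 2 * m + 1.
  by have := cardsD1 x A; rewrite xA cardA mulnS add1n; lia.
by rewrite sum_nat_const cardAx odd_dfactS mulnC.
Qed.

End PerfectMatchings.

Section PermAction.

Variable T : finType.
Implicit Types (x y : T) (A e : {set T}) (M : {set {set T}}) (s : {perm T}).

Lemma edge_actE M s : ('P^*)^*%act M s = [set s @: e | e : {set T} in M].
Proof. by []. Qed.

Lemma edge_actU1 M s x y :
  ('P^*)^*%act ([set x; y] |: M) s = [set s x; s y] |: ('P^*)^*%act M s.
Proof. by rewrite !edge_actE imsetU1 imsetU1 imset_set1. Qed.

Lemma pmatchings_act A M s :
  M \in pmatchings A -> ('P^*)^*%act M s \in pmatchings (s @: A).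
Proof.
case/pmatchingsP=> PM M2; apply/pmatchingsP; split.
  by rewrite edge_actE imset_partition //; exact: perm_inj.
by move=> _ /imsetP[e eM ->]; rewrite card_imset ?M2 //; exact: perm_inj.
Qed.

Lemma pmatchings_trans A m M N : #|A| = 2 * m ->
  M \in pmatchings A -> N \in pmatchings A ->
  exists2 s, perm_on A s & ('P^*)^*%act M s = N.
Proof.
elim: m A M N => [|m IHm] A M N cardA MA NA.
  move/eqP: cardA MA NA; rewrite cards_eq0 => /eqP ->.
  rewrite pmatchings0 !inE => /eqP -> /eqP ->.
  by exists 1%g; [exact: perm_on1 | exact: act1].
have /card_gt0P[x xA] : 0 < #|A| by rewrite cardA mulnS.
have [y yx xyM] := pmatching_mate MA xA.
have [z zx xzN] := pmatching_mate NA xA.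
have yzA : [set y; z] \subset A.
  rewrite subUset !sub1set; apply/andP; split.
    by apply: (subsetP (pmatching_edge_sub MA xyM)); rewrite !inE eqxx orbT.
  by apply: (subsetP (pmatching_edge_sub NA xzN)); rewrite !inE eqxx orbT.
pose t := tperm y z; pose M1 := ('P^*)^*%act M t.
have tA : perm_on A t := subset_trans (tperm_on y z) yzA.
have M1A : M1 \in pmatchings A.
  by rewrite -[A in pmatchings A](im_perm_on tA) pmatchings_act.
have xzM1 : [set x; z] \in M1.
  by rewrite /M1 -(setD1K xyM) edge_actU1 tpermL tpermD // setU11.
have cardAxz : #|A :\: [set x; z]| = 2 * m.
  rewrite cardsDS ?subUset ?sub1set ?xA ?(subsetP yzA) ?inE ?eqxx ?orbT //.
  by rewrite cards2 eq_sym zx cardA mulnS addKn.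
have [s sA Es] := IHm _ _ _ cardAxz (pmatchingsD2 M1A xzM1) (pmatchingsD2 NA xzN).
have sxz : s x = x /\ s z = z by rewrite !(out_perm sA) // !inE eqxx ?orbT.
exists (t * s)%g; first by rewrite perm_onM //; apply: subset_trans sA (subsetDl _ _).
by rewrite actM -/M1 -(setD1K xzM1) edge_actU1 Es sxz.1 sxz.2 setD1K.
Qed.

End PermAction.

Section InvolutionMatching.

Variable T : finType.
Implicit Types (f g : T -> T) (x y : T).

Definition inv_matching f : {set {set T}} := [set [set x; f x] | x : T].

Lemma inv_matching_edgeE f x y :
  involutive f -> y \in [set x; f x] -> [set x; f x] = [set y; f y].
Proof. by move=> fK; rewrite !inE => /orP[]/eqP->; rewrite // fK setUC. Qed.

Lemma inv_matching_pmatching f : involutive f -> (forall x, f x != x) ->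
  inv_matching f \in pmatchings [set: T].
Proof.
move=> fK fx; apply/pmatchingsP; split; last first.
  by move=> _ /imsetP[x _ ->]; rewrite cards2 eq_sym fx.
apply/and3P; split.
- apply/eqP/setP => y; rewrite cover_imset inE; apply/bigcupP.
  by exists y; rewrite ?inE ?eqxx.
- apply/trivIsetP => _ _ /imsetP[x _ ->] /imsetP[y _ ->].
  apply: contraR; rewrite -setI_eq0 => /set0Pn[z /setIP[zx zy]].
  by rewrite (inv_matching_edgeE fK zx) (inv_matching_edgeE fK zy).
- apply/imsetP => -[x _ /setP/(_ x)]; rewrite !inE eqxx; discriminate.
Qed.

Lemma inv_matching_disjoint f g : involutive f -> involutive g ->
  (forall x, f x != g x) -> [disjoint inv_matching f & inv_matching g].
Proof.
move=> fK gK fg; rewrite -setI_eq0; apply/eqP/setP => e; rewrite !inE.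
apply/negP => /andP[/imsetP[x _ ->] /imsetP[y _ Exy]].
have xy : x \in [set y; g y] by rewrite -Exy !inE eqxx.
rewrite (inv_matching_edgeE gK xy) in Exy.
have fxE : f x \in [set x; g x] by rewrite -Exy !inE eqxx orbT.
have gxE : g x \in [set x; f x] by rewrite Exy !inE eqxx orbT.
move: fxE gxE; rewrite !inE (negbTE (fg x)) (eq_sym (g x) (f x)) (negbTE (fg x)) !orbF.
by move=> /eqP fxx /eqP gxx; move: (fg x); rewrite fxx gxx eqxx.
Qed.

End InvolutionMatching.

Lemma eqn_modMl_coprime c a b d :
  coprime c d -> (c * a == c * b %[mod d]) = (a == b %[mod d]).
Proof.
move=> cd; wlog le_ba : a b / b <= a.
  by move=> IH; case: (leqP b a) => [|/ltnW] /IH; rewrite // eq_sym => ->; rewrite eq_sym.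
by rewrite !eqn_mod_dvd ?leq_mul2l ?le_ba ?orbT // -mulnBr Gauss_dvdr 1?coprime_sym.
Qed.

Section OddModulus.

Variable m : nat.
Hypothesis m_odd : odd m.

Let m_gt0 : 0 < m. Proof. by case: m m_odd. Qed.

Definition mirror r x := (2 * r + m - x) %% m.

Lemma mirror_lt r x : mirror r x < m.
Proof. by rewrite ltn_mod. Qed.

Lemma mirrorD r x : x <= m -> x + mirror r x = 2 * r %[mod m].
Proof. by move=> xm; rewrite modnDmr subnKC ?modnDr // (leq_trans xm) ?leq_addl. Qed.

Let eqn_ltDl p y z : y < m -> z < m -> (y == z) = (p + y == p + z %[mod m]).
Proof. by move=> ym zm; rewrite eqn_modDl !modn_small. Qed.

Let eqn_double a b : a < m -> b < m -> (2 * a == 2 * b %[mod m]) = (a == b).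
Proof. by move=> am bm; rewrite eqn_modMl_coprime ?coprime2n // !modn_small. Qed.

Lemma mirrorK r x : x < m -> mirror r (mirror r x) = x.
Proof.
move=> xm; apply/eqP; rewrite (eqn_ltDl (mirror r x)) ?mirror_lt //.
by rewrite (mirrorD _ (ltnW (mirror_lt r x))) addnC (mirrorD _ (ltnW xm)).
Qed.

Lemma mirror_eq r x : r < m -> x < m -> (mirror r x == x) = (x == r).
Proof.
move=> rm xm; rewrite (eqn_ltDl x) ?mirror_lt // (mirrorD _ (ltnW xm)).
by rewrite addnn -mul2n eq_sym eqn_double.
Qed.

Lemma mirror_center r x : r < m -> x < m -> (mirror r x == r) = (x == r).
Proof.
by move=> rm xm; rewrite -(mirror_eq rm (mirror_lt r x)) mirrorK // eq_sym mirror_eq.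
Qed.

Lemma mirror_inj r s x : r < m -> s < m -> x < m ->
  (mirror r x == mirror s x) = (r == s).
Proof.
move=> rm sm xm; rewrite (eqn_ltDl x) ?mirror_lt //.
by rewrite !(mirrorD _ (ltnW xm)) eqn_double.
Qed.

(* Pairing x with 2r - x (mod m) matches every point of 'I_m except r, which is
   paired with the extra point m instead. *)
Definition factor_mate r x := if x == m then r else if x == r then m else mirror r x.

Lemma factor_mate_le r x : r < m -> factor_mate r x <= m.
Proof.
move=> rm; rewrite /factor_mate; case: ifP => _; first exact: ltnW.
by case: ifP => _ //; apply/ltnW/mirror_lt.
Qed.

Lemma factor_mateK r x : r < m -> x <= m -> factor_mate r (factor_mate r x) = x.
Proof.
move=> rm xm; rewrite /factor_mate; have [->|xNm] := eqVneq x m.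
  by rewrite eqxx ltn_eqF // eqxx.
have [->|xNr] := eqVneq x r; first by rewrite eqxx.
have xlt : x < m by rewrite ltn_neqAle xNm.
by rewrite ltn_eqF ?mirror_lt // mirror_center // (negbTE xNr) mirrorK.
Qed.

Lemma factor_mate_neq r x : r < m -> x <= m -> factor_mate r x != x.
Proof.
move=> rm xm; rewrite /factor_mate; have [->|xNm] := eqVneq x m.
  by rewrite ltn_eqF.
have [->|xNr] := eqVneq x r; first by rewrite eq_sym ltn_eqF.
by rewrite mirror_eq // ltn_neqAle xNm.
Qed.

Lemma factor_mate_inj r s x : r < m -> s < m -> x <= m ->
  (factor_mate r x == factor_mate s x) = (r == s).
Proof.
move=> rm sm xm; rewrite /factor_mate; have [//|xNm] := eqVneq x m.
have xlt : x < m by rewrite ltn_neqAle xNm.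
have [->|xNr] := eqVneq x r.
  have [_|rNs] := eqVneq r s; first by rewrite eqxx.
  by rewrite eq_sym ltn_eqF ?mirror_lt.
have [<-|xNs] := eqVneq x s; first by rewrite ltn_eqF ?mirror_lt // eq_sym (negbTE xNr).
by rewrite mirror_inj.
Qed.

End OddModulus.

Section CliqueCocliqueBound.

Variables (gT : finGroupType) (V : finType) (to : {action gT &-> V}).
Hypothesis to_trans : forall u v, exists a, to u a = v.

Lemma card_amove u v : #|V| * #|amove to [set: gT] u v| = #|gT|.
Proof.
have [a <-] := to_trans u v.
have orbitT : orbit to [set: gT] u = [set: V].
  apply/setP => w; rewrite inE; apply/orbitP; have [b ubw] := to_trans u w.
  by exists b; rewrite ?inE.
rewrite amove_act ?inE // card_rcoset -cardsT -orbitT card_orbit_in_stab //.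
by rewrite cardsT.
Qed.

Variable adj : rel V.
Hypothesis to_hom : forall a, {homo to^~ a : u v / adj u v}.

Lemma clique_coclique_bound (C S : {set V}) :
  {in C &, forall u v, u != v -> adj u v} -> {in S &, forall u v, ~~ adj u v} ->
  #|C| * #|S| <= #|V|.
Proof.
move=> cliqueC cocliqueS.
(* Double count the pairs (a, u) with u in C and to u a in S. *)
have meet1 a : #|[set u in C | to u a \in S]| <= 1.
  apply/card_le1_eqP => u v; rewrite !inE => /andP[uC uaS] /andP[vC vaS].
  apply/eqP; apply: contraT => uv.
  rewrite -(negbTE (cocliqueS _ _ uaS vaS)); apply: to_hom.
  by rewrite cliqueC // eq_sym.
have count : \sum_(a : gT) #|[set u in C | to u a \in S]| =
             \sum_(u in C) \sum_(v in S) #|amove to [set: gT] u v|.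
  rewrite (eq_bigr (fun a => \sum_(u in C | to u a \in S) 1)); last first.
    by move=> a _; rewrite sum1dep_card.
  rewrite -(exchange_big_dep xpredT) //=; apply: eq_bigr => u uC.
  rewrite (partition_big (to u) (mem S)) //=; apply: eq_bigr => v vS.
  rewrite -sum1dep_card; apply: eq_bigl => a.
  by rewrite !inE; case: (to u a =P v) => [-> | _]; rewrite ?vS ?andbF.
have gT_gt0 : 0 < #|gT| by rewrite -cardsT cardG_gt0.
rewrite -(leq_pmul2r gT_gt0).
have : \sum_(a : gT) #|[set u in C | to u a \in S]| <= \sum_(a : gT) 1.
  by apply: leq_sum => a _; apply: meet1.
rewrite count sum1_card.
move/(leq_mul (leqnn #|V|)); rewrite big_distrr (eq_bigr (fun _ => #|S| * #|gT|)).
  by rewrite sum_nat_const mulnA.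
move=> u _; rewrite big_distrr (eq_bigr (fun _ => #|gT|)) ?sum_nat_const //.
by move=> v _; apply: card_amove.
Qed.

End CliqueCocliqueBound.

Section PerfectMatchingGraph.

Variable n : nat.
Implicit Types (M N : pm n) (s : {perm 'I_n}).

Lemma is_pmE (M : {set {set 'I_n}}) : is_pm M = (M \in pmatchings [set: 'I_n]).
Proof. by rewrite inE. Qed.

Lemma pm_valP M : val M \in pmatchings [set: 'I_n].
Proof. by rewrite -is_pmE; apply: valP. Qed.

Lemma card_pm : ~~ odd n -> #|{: pm n}| = odd_dfact n./2.
Proof.
move=> n_even; rewrite card_sig -(card_pmatchings (A := [set: 'I_n])).
  by apply: eq_card => M; rewrite !inE.
by rewrite cardsT card_ord mul2n even_halfK.
Qed.

Lemma pm_act_subproof M s : is_pm (('P^*)^*%act (val M) s).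
Proof.
rewrite is_pmE -[[set: 'I_n]](im_perm_on (u := s)) ?pmatchings_act ?pm_valP //.
by apply/subsetP => x; rewrite in_setT.
Qed.

Definition pm_act M s : pm n := Sub (('P^*)^*%act (val M) s) (pm_act_subproof M s).

Lemma pm_act1 : pm_act^~ 1%g =1 id.
Proof. by move=> M; apply: val_inj; rewrite /= act1. Qed.

Lemma pm_actM M : act_morph pm_act M.
Proof. by move=> s t; apply: val_inj; rewrite /= actM. Qed.

Definition pm_action := TotalAction pm_act1 pm_actM.

Lemma pm_actionE M s : val (pm_action M s) = pm_act_set s (val M).
Proof. by []. Qed.

Lemma pm_adj_action M N s : pm_adj (pm_action M s) (pm_action N s) = pm_adj M N.
Proof. by rewrite /pm_adj /= !setactE imset_disjoint //; apply: act_inj. Qed.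

Lemma pm_aut_action s : pm_aut (pm_action^~ s).
Proof.
split=> [|M N]; last exact: pm_adj_action.
by exists (pm_action^~ s^-1%g) => M; [exact: actK | exact: actKV].
Qed.

Lemma pm_action_trans : ~~ odd n -> forall M N, exists s, pm_action M s = N.
Proof.
move=> n_even M N; have cardT : #|[set: 'I_n]| = 2 * n./2.
  by rewrite cardsT card_ord mul2n even_halfK.
have [s _ Es] := pmatchings_trans cardT (pm_valP M) (pm_valP N).
by exists s; apply: val_inj.
Qed.

Lemma pm_adj_irrefl M : 0 < n -> ~~ pm_adj M M.
Proof.
move=> n_gt0; have [y _ xyM] := pmatching_mate (pm_valP M) (in_setT (Ordinal n_gt0)).
by rewrite /pm_adj -setI_eq0 setIid; apply: contraTneq xyM => ->; rewrite in_set0.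
Qed.

Lemma pm_clique_le (S : {set pm n}) : 0 < n -> is_clique S -> #|S| <= n.-1.
Proof.
move=> n_gt0 cliqueS; pose x := Ordinal n_gt0.
pose y M := mate x (val M).
have yP M : y M != x /\ [set x; y M] \in val M := mateP (pm_valP M) (in_setT x).
rewrite -(card_in_imset (f := y)) => [|M N MS NS yMN]; last first.
  apply/eqP; apply: contraT => MN; have := cliqueS M N MS NS MN.
  by rewrite /pm_adj -setI_eq0 => /eqP/setP/(_ [set x; y M]); rewrite !inE {2}yMN !(yP _).2.
have -> : n.-1 = #|[set~ x]| by rewrite cardsC1 card_ord.
apply/subset_leq_card/subsetP => _ /imsetP[M _ ->].
by rewrite !inE (yP M).1.
Qed.

Definition pm_star (x y : 'I_n) := [set M : pm n | [set x; y] \in val M].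

Lemma pm_star_coclique x y : is_coclique (pm_star x y).
Proof.
move=> M N; rewrite !inE => xyM xyN; rewrite /pm_adj -setI_eq0.
by apply/set0Pn; exists [set x; y]; rewrite inE xyM.
Qed.

Lemma card_pm_star x y : ~~ odd n -> x != y -> #|pm_star x y| = odd_dfact (n./2).-1.
Proof.
move=> n_even xy; rewrite -(card_imset _ val_inj).
have -> : val @: pm_star x y = [set M in pmatchings [set: 'I_n] | [set x; y] \in M].
  apply/setP => M; rewrite inE; apply/imsetP/andP => [[N + ->]|[MT xyM]].
    by rewrite inE => xyN; rewrite pm_valP.
  by rewrite -is_pmE in MT; exists (Sub M MT); rewrite ?inE ?SubK.
rewrite card_pmatchings_edge ?in_setT //; apply: card_pmatchings.
rewrite cardsDS ?subsetT // cardsT card_ord cards2 xy.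
by have := even_halfK n_even; rewrite -mul2n; lia.
Qed.

Lemma pm_clique_coclique_le (C S : {set pm n}) : ~~ odd n ->
  is_clique C -> is_coclique S -> #|C| * #|S| <= #|{: pm n}|.
Proof.
move=> n_even cliqueC cocliqueS.
apply: (clique_coclique_bound (pm_action_trans n_even) (adj := @pm_adj n)) => //.
by move=> s M N; rewrite /= pm_adj_action.
Qed.

End PerfectMatchingGraph.

Arguments pm_action {n}.

Section OneFactorization.

Variable m : nat.
Hypothesis m_odd : odd m.
Implicit Types (r s : 'I_m) (x : 'I_m.+1).

Definition factor_inv r x : 'I_m.+1 := inord (factor_mate m r x).

Lemma val_factor_inv r x : factor_inv r x = factor_mate m r x :> nat.
Proof. by rewrite /factor_inv inordK // ltnS factor_mate_le. Qed.

Lemma factor_invK r : involutive (factor_inv r).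
Proof.
by move=> x; apply: val_inj => /=; rewrite !val_factor_inv factor_mateK // -ltnS.
Qed.

Lemma factor_inv_neq r x : factor_inv r x != x.
Proof. by rewrite -val_eqE /= val_factor_inv factor_mate_neq // -ltnS. Qed.

Lemma factor_inv_inj r s x : r != s -> factor_inv r x != factor_inv s x.
Proof.
by rewrite -!val_eqE /= !val_factor_inv factor_mate_inj // -ltnS.
Qed.

Lemma one_factor_subproof r : is_pm (inv_matching (factor_inv r)).
Proof.
rewrite is_pmE; apply: inv_matching_pmatching; first exact: factor_invK.
exact: factor_inv_neq.
Qed.

Definition one_factor r : pm m.+1 := Sub _ (one_factor_subproof r).

Definition one_factorization := [set one_factor r | r : 'I_m].

Lemma one_factor_adj r s : r != s -> pm_adj (one_factor r) (one_factor s).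
Proof.
move=> rs; apply: inv_matching_disjoint => [||x]; [exact: factor_invK.. | ].
exact: factor_inv_inj.
Qed.

Lemma one_factorization_clique : is_clique one_factorization.
Proof.
move=> _ _ /imsetP[r _ ->] /imsetP[s _ ->] rs; apply: one_factor_adj.
by apply: contraNneq rs => ->.
Qed.

Lemma card_one_factorization : #|one_factorization| = m.
Proof.
rewrite card_imset ?card_ord // => r s Ers; apply/eqP; apply: contraT => rs.
by have := one_factor_adj rs; rewrite Ers (negbTE (pm_adj_irrefl _ _)).
Qed.

End OneFactorization.

Lemma pm_max_clique n : ~~ odd n -> 0 < n ->
  exists C : {set pm n}, is_clique C /\ #|C| = n.-1.
Proof.
case: n => // m; rewrite /= negbK => m_odd _.
exists (one_factorization m_odd); split; first exact: one_factorization_clique.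
exact: card_one_factorization.
Qed.

Lemma pm_max_coclique n : ~~ odd n -> 0 < n ->
  exists S : {set pm n}, is_coclique S /\ #|S| = odd_dfact (n./2).-1.
Proof.
case: n => [|[|n]] // n_even _; exists (pm_star ord0 ord_max).
by split; [apply: pm_star_coclique | apply: card_pm_star].
Qed.

Lemma pm_coclique_le n (S : {set pm n}) : ~~ odd n -> 0 < n ->
  is_coclique S -> #|S| <= odd_dfact (n./2).-1.
Proof.
move=> n_even n_gt0 cocliqueS.
have [C [cliqueC cardC]] := pm_max_clique n_even n_gt0.
have := pm_clique_coclique_le n_even cliqueC cocliqueS.
have n2 := even_halfK n_even.
have half_gt0 : 0 < n./2 by lia.
rewrite cardC card_pm // -(prednK half_gt0) odd_dfactS.
have -> : (2 * (n./2).-1 + 1 = n.-1) by lia.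
by rewrite mulnC leq_pmul2r //; lia.
Qed.

Theorem theorem3p3 (k : nat) (hk : 0 < k) :
  (* (1) vertex transitivity *)
  (forall M N : pm (2 * k), exists f, pm_aut f /\ f M = N) /\
  (* (1') the natural Sym(2k) action gives automorphisms acting transitively *)
  (exists act : {perm 'I_(2 * k)} -> pm (2 * k) -> pm (2 * k),
     (forall s M, val (act s M) = pm_act_set s (val M)) /\
     (forall s, pm_aut (act s)) /\
     (forall M N, exists s, act s M = N)) /\
  (* (2) maximum clique size is 2k-1 *)
  ((exists S : {set pm (2 * k)}, is_clique S /\ #|S| = 2 * k - 1) /\
   (forall S : {set pm (2 * k)}, is_clique S -> #|S| <= 2 * k - 1)) /\
  (* (3) maximum coclique size is (2k-3)!! *)
  ((exists S : {set pm (2 * k)}, is_coclique S /\ #|S| = odd_dfact k.-1) /\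
   (forall S : {set pm (2 * k)}, is_coclique S -> #|S| <= odd_dfact k.-1)).
Proof.
have even_2k : ~~ odd (2 * k) by rewrite mul2n odd_double.
have pos_2k : 0 < 2 * k by rewrite muln_gt0.
have half_2k : (2 * k)./2 = k by rewrite mul2n doubleK.
split.
  move=> M N; have [s <-] := pm_action_trans even_2k M N.
  by exists (fun M => pm_action M s); split; first exact: pm_aut_action.
split.
  exists (fun s M => pm_action M s); split; first by move=> s M; apply: pm_actionE.
  by split; [exact: pm_aut_action | exact: pm_action_trans].
rewrite subn1; split.
  by split; [exact: pm_max_clique | move=> S; exact: pm_clique_le].
split; first by have := pm_max_coclique even_2k pos_2k; rewrite half_2k.
by move=> S; have := @pm_coclique_le _ S even_2k pos_2k; rewrite half_2k.
Qed.
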